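(* For the least-squares approximate policy iteration sequence described in the context, for every $k\ge1$, $$\|J_k-J^{\mu_k}\|_\infty\le \alpha^{m+H-1}\delta_{FV}\,\|J_{k-1}-J^{\mu_{k-1}}\|_\infty+\frac{\alpha^m+\alpha^{m+H-1}}{1-\alpha}\delta_{FV}+\delta_{app}+\delta_{FV}\epsilon_{PE}.$$ Consequently, writing $\beta:=\alpha^{m+H-1}\delta_{FV}$ and $\tau:=\frac{\alpha^m+\alpha^{m+H-1}}{1-\alpha}\delta_{FV}+\delta_{app}+\delta_{FV}\epsilon_{PE}$, if $\beta<1$ then $\|J_k-J^{\mu_k}\|_\infty\le\beta^k\|J_0-J^{\mu_0}\|_\infty+\frac{\tau}{1-\beta}$ for all $k\ge0$.
   Context: Consider a Markov decision process with finite state space $S$, finite action space $A$, transition probabilities $P_{ij}(a)$, rewards $r(s,a)\in[0,1]$, and discount factor $\alpha\in(0,1)$. A (deterministic stationary) policy is a map $\mu:S\to A$; its value is $J^\mu(s)=E[\sum_{t\ge0}\alpha^t r(s_t,\mu(s_t))\mid s_0=s]$, and $J^*(s)=\max_\mu J^\mu(s)$. For a policy $\mu$, $(T_\mu J)(s)=r(s,\mu(s))+\alpha\sum_j P_{sj}(\mu(s))J(j)$; the Bellman operator is $(TJ)(s)=\max_{a\in A}\{r(s,a)+\alpha\sum_j P_{sj}(a)J(j)\}$; powers denote repeated application. $\|\cdot\|_\infty$ denotes the max norm and the induced matrix norm. Least-squares approximate policy iteration: fix integers $m\ge1$, $H\ge1$, constants $\epsilon_{LA},\epsilon_{PE}\ge0$,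 a feature matrix $\Phi\in\mathbb{R}^{|S|\times d}$ whose row $i$ is $\phi(i)^\top$, and subsets $D_k\subseteq S$ ($k\ge0$) such that $\{\phi(i)\}_{i\in D_k}$ has rank $d$. Let $\Phi_{D_k}$ be the submatrix of $\Phi$ with rows indexed by $D_k$, $P_k\in\{0,1\}^{|D_k|\times|S|}$ the matrix selecting the coordinates in $D_k$, and $\mathcal{M}_{k+1}:=\Phi(\Phi_{D_k}^\top\Phi_{D_k})^{-1}\Phi_{D_k}^\top P_k$ for $k\ge0$. Start with arbitrary $J_0\in\mathbb{R}^{|S|}$ and an arbitrary policy $\mu_0$. For each $k\ge0$: $\mu_{k+1}$ is any policy with $\|T^HJ_k-T_{\mu_{k+1}}T^{H-1}J_k\|_\infty\le\epsilon_{LA}$; $w_{k+1}\in\mathbb{R}^{|S|}$ is a noise vector with $w_{k+1}(i)=0$ for $i\notin D_k$ and $\|w_{k+1}\|_\infty\le\epsilon_{PE}$; and $J_{k+1}=\mathcal{M}_{k+1}(T^m_{\mu_{k+1}}T^{H-1}J_k+w_{k+1})$. Define $\delta_{FV}:=\sup_{k\ge1}\|\mathcal{M}_k\|_\infty$ (assumed finite) and $\delta_{app}:=\sup_{k\ge1}\sup_{\mu}\|\mathcal{M}_kJ^\mu-J^\mu\|_\infty$, the inner supremum over all policies. *)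

From HB Require Import structures.
From mathcomp Require Import all_boot all_order all_algebra.
From mathcomp Require Import all_classical all_reals all_analysis.
Set Implicit Arguments. Unset Strict Implicit. Unset Printing Implicit Defensive.
Import Order.TTheory GRing.Theory Num.Theory.
Local Open Scope ring_scope.

Definition vnorm {R : realType} {n : nat} (v : 'cV[R]_n) : R :=
  \big[Num.max/0]_(i < n) `|v i 0|.

Definition mnorm {R : realType} {n p : nat} (M : 'M[R]_(n, p)) : R :=
  \big[Num.max/0]_(i < n) \sum_(j < p) `|M i j|.

(* maximum over the (finite, nonempty in practice) action set *)
Definition maxA {R : realType} {A : finType} (f : A -> R) : R :=
  if [pick a : A] is Some a0 then \big[Num.max/f a0]_(a : A) f a else 0.

Definition Tpol {R : realType} {n : nat} {A : finType}
  (P : 'I_n -> A -> 'I_n -> R) (r : 'I_n -> A -> R) (alpha : R)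
  (mu : 'I_n -> A) (J : 'cV[R]_n) : 'cV[R]_n :=
  \col_s (r s (mu s) + alpha * \sum_(j < n) P s (mu s) j * J j 0).

Definition Tbell {R : realType} {n : nat} {A : finType}
  (P : 'I_n -> A -> 'I_n -> R) (r : 'I_n -> A -> R) (alpha : R)
  (J : 'cV[R]_n) : 'cV[R]_n :=
  \col_s maxA (fun a => r s a + alpha * \sum_(j < n) P s a j * J j 0).

Definition Pmat {R : realType} {n : nat} {A : finType}
  (P : 'I_n -> A -> 'I_n -> R) (mu : 'I_n -> A) : 'M[R]_n :=
  \matrix_(s, j) P s (mu s) j.
Definition rvec {R : realType} {n : nat} {A : finType}
  (r : 'I_n -> A -> R) (mu : 'I_n -> A) : 'cV[R]_n :=
  \col_s r s (mu s).

(* J^mu(s) = E[sum_t alpha^t r(s_t, mu(s_t)) | s_0 = s]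
          = sum_{t>=0} alpha^t (P_mu^t r_mu)(s)  (series limit) *)
Definition Jpol {R : realType} {n : nat} {A : finType}
  (P : 'I_n -> A -> 'I_n -> R) (r : 'I_n -> A -> R) (alpha : R)
  (mu : 'I_n -> A) : 'cV[R]_n :=
  \col_s limn (fun N : nat =>
     \sum_(t < N) alpha ^+ t * ((Pmat P mu ^+ t) *m rvec r mu) s 0).

(* Phi_D : rows of Phi indexed by D (in the enumeration order of D) *)
Definition PhiD {R : realType} {n d : nat} (Phi : 'M[R]_(n, d))
  (D : {set 'I_n}) : 'M[R]_(#|D|, d) :=
  \matrix_(i, j) Phi (enum_val i) j.

Definition SelD {R : realType} {n : nat} (D : {set 'I_n}) : 'M[R]_(#|D|, n) :=
  \matrix_(i, j) (enum_val i == j)%:R.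

Definition Mproj {R : realType} {n d : nat} (Phi : 'M[R]_(n, d))
  (D : {set 'I_n}) : 'M[R]_n :=
  Phi *m invmx ((PhiD Phi D)^T *m PhiD Phi D) *m (PhiD Phi D)^T *m (SelD D : 'M[R]_(#|D|, n)).

From Pilot Require Import Defs.
From HB Require Import structures.
From mathcomp Require Import all_boot all_order all_algebra.
From mathcomp Require Import all_classical all_reals all_analysis.
From mathcomp Require Import ring lra zify.
Import Order.TTheory GRing.Theory Num.Theory.
Import numFieldNormedType.Exports.
Set Implicit Arguments.
Unset Strict Implicit.
Unset Printing Implicit Defensive.
Local Open Scope ring_scope.
Local Open Scope classical_set_scope.

(* Write B = 1/(1-alpha).  Every Bellman backup r(s,a) + alpha sum_j P_sj(a) x_j
   is alpha-Lipschitz in the max norm and maps the box [0,B]^S into itself, so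
   T_mu and T are alpha-contractions preserving [0,B]^S.  The value J^mu is the
   limit of the partial sums of its defining series; these are the iterates of
   T_mu from 0, hence J^mu lies in the box and is the fixed point of T_mu.
   For one iteration we split
     J_{k+1} - J^{mu_{k+1}} = M (T_{mu_{k+1}}^m T^{H-1} J_k - J^{mu_{k+1}})
                            + (M J^{mu_{k+1}} - J^{mu_{k+1}}) + M w_{k+1};
   the rollout contracts by alpha^m, and T^{H-1} J_k is within
   alpha^{H-1} |J_k - J^{mu_k}| + B of J^{mu_{k+1}}, because T^{H-1} J^{mu_k}
   and J^{mu_{k+1}} both lie in the box.  This yields the one-step inequality, and unrolling the affine recursion gives the second claim. *)

Section MaxNorm.
Variable R : realType.

Lemma vnorm_ge0 n (v : 'cV[R]_n) : 0 <= vnorm v.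
Proof. by rewrite /vnorm; elim/big_ind: _ => // x y hx hy; rewrite le_max hx. Qed.

Lemma vnorm_ge n (v : 'cV[R]_n) i : `|v i 0| <= vnorm v.
Proof. exact: (le_bigmax 0 (fun i => `|v i 0|) i). Qed.

Lemma vnorm_le n (v : 'cV[R]_n) (c : R) :
  0 <= c -> (forall i, `|v i 0| <= c) -> vnorm v <= c.
Proof. by move=> c0 h; apply: bigmax_le. Qed.

Lemma vnorm_triangle n (u v : 'cV[R]_n) : vnorm (u + v) <= vnorm u + vnorm v.
Proof.
apply: vnorm_le => [|i]; first by rewrite addr_ge0 // vnorm_ge0.
rewrite mxE; apply: (le_trans (ler_normD _ _)).
by apply: lerD; apply: vnorm_ge.
Qed.

Lemma vnorm_subr n (u v : 'cV[R]_n) : vnorm (u - v) <= vnorm u + vnorm v.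
Proof.
apply: vnorm_le => [|i]; first by rewrite addr_ge0 // vnorm_ge0.
rewrite !mxE; apply: (le_trans (ler_normB _ _)).
by apply: lerD; apply: vnorm_ge.
Qed.

Lemma mnorm_ge0 n p (M : 'M[R]_(n, p)) : 0 <= mnorm M.
Proof.
rewrite /mnorm; elim/big_ind: _ => // [x y hx hy|i _]; first by rewrite le_max hx.
by apply: sumr_ge0 => *.
Qed.

Lemma vnorm_mulmx n p (M : 'M[R]_(n, p)) (v : 'cV[R]_p) :
  vnorm (M *m v) <= mnorm M * vnorm v.
Proof.
apply: vnorm_le => [|i]; first by rewrite mulr_ge0 ?vnorm_ge0 ?mnorm_ge0.
rewrite mxE; apply: (le_trans (ler_norm_sum _ _ _)).
apply: (@le_trans _ _ ((\sum_j `|M i j|) * vnorm v)).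
  rewrite mulr_suml; apply: ler_sum => j _; rewrite normrM.
  by apply: ler_wpM2l => //; apply: vnorm_ge.
apply: ler_wpM2r; first exact: vnorm_ge0.
exact: (le_bigmax 0 (fun i => \sum_j `|M i j|) i).
Qed.

Lemma projection_error n (M : 'M[R]_n) (x w j : 'cV[R]_n) :
  vnorm (M *m (x + w) - j)
    <= mnorm M * vnorm (x - j) + vnorm (M *m j - j) + mnorm M * vnorm w.
Proof.
have -> : M *m (x + w) - j = M *m (x - j) + (M *m j - j) + M *m w.
  by rewrite mulmxDr mulmxBr addrAC addrA subrK.
apply: (le_trans (vnorm_triangle _ _)); apply: lerD; last exact: vnorm_mulmx.
apply: (le_trans (vnorm_triangle _ _)); apply: lerD => //.
exact: vnorm_mulmx.
Qed.

Lemma wavg_lipschitz n (p : 'I_n -> R) (hp0 : forall j, 0 <= p j)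
  (hp1 : \sum_j p j = 1) (x y : 'cV[R]_n) :
  `|\sum_j p j * x j 0 - \sum_j p j * y j 0| <= vnorm (x - y).
Proof.
rewrite -sumrB; apply: (le_trans (ler_norm_sum _ _ _)).
apply: (@le_trans _ _ (\sum_j p j * vnorm (x - y))).
  apply: ler_sum => j _; rewrite -mulrBr normrM ger0_norm //.
  by apply: ler_wpM2l => //; have := vnorm_ge (x - y) j; rewrite !mxE.
by rewrite -mulr_suml hp1 mul1r.
Qed.

Lemma wavg_box n (p : 'I_n -> R) (hp0 : forall j, 0 <= p j)
  (hp1 : \sum_j p j = 1) (x : 'cV[R]_n) (c : R) :
  (forall j, 0 <= x j 0 <= c) -> 0 <= \sum_j p j * x j 0 <= c.
Proof.
move=> hx; apply/andP; split.
  by apply: sumr_ge0 => j _; case/andP: (hx j) => h1 _; rewrite mulr_ge0.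
apply: (@le_trans _ _ (\sum_j p j * c)).
  by apply: ler_sum => j _; case/andP: (hx j) => _ h2; rewrite ler_wpM2l.
by rewrite -mulr_suml hp1 mul1r.
Qed.

Definition inbox n (c : R) (x : 'cV[R]_n) := forall i, 0 <= x i 0 <= c.

Lemma inbox_dist n (c : R) (x y : 'cV[R]_n) :
  0 <= c -> inbox c x -> inbox c y -> vnorm (x - y) <= c.
Proof.
move=> c0 hx hy; apply: vnorm_le => // i; rewrite !mxE.
case/andP: (hx i) => ? ?; case/andP: (hy i) => ? ?.
by rewrite ler_norml; apply/andP; split; lra.
Qed.

Lemma iter_contraction n (T : 'cV[R]_n -> 'cV[R]_n) (alpha : R) (ha : 0 <= alpha)
  (hT : forall x y, vnorm (T x - T y) <= alpha * vnorm (x - y)) k x y :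
  vnorm (iter k T x - iter k T y) <= alpha ^+ k * vnorm (x - y).
Proof.
elim: k => [|k IH]; first by rewrite expr0 mul1r.
rewrite !iterS exprS -mulrA; apply: (le_trans (hT _ _)).
exact: ler_wpM2l.
Qed.

End MaxNorm.

Section MaxOverActions.
Variables (R : realType) (A : finType) (a0 : A).

Lemma maxA_ge (f : A -> R) a : f a <= Defs.maxA f.
Proof.
rewrite /Defs.maxA; case: pickP => [a1 _|h]; last by have := h a.
exact: (le_bigmax _ f a).
Qed.

Lemma maxA_le (f : A -> R) (c : R) : (forall a, f a <= c) -> Defs.maxA f <= c.
Proof.
move=> h; rewrite /Defs.maxA; case: pickP => [a1 _|h']; last by have := h' a0.
exact: bigmax_le.
Qed.

Lemma maxA_lipschitz (f g : A -> R) (c : R) :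
  (forall a, `|f a - g a| <= c) -> `|Defs.maxA f - Defs.maxA g| <= c.
Proof.
move=> h.
have hgf : Defs.maxA g <= Defs.maxA f + c.
  apply: maxA_le => a; have := maxA_ge f a; move: (h a).
  by rewrite ler_norml => /andP[? ?] ?; lra.
have hfg : Defs.maxA f <= Defs.maxA g + c.
  apply: maxA_le => a; have := maxA_ge g a; move: (h a).
  by rewrite ler_norml => /andP[? ?] ?; lra.
by rewrite ler_norml; apply/andP; split; lra.
Qed.

Lemma maxA_box (f : A -> R) (lo hi : R) :
  (forall a, lo <= f a <= hi) -> lo <= Defs.maxA f <= hi.
Proof.
move=> h; apply/andP; split; last by apply: maxA_le => a; case/andP: (h a).
by case/andP: (h a0) => h1 _; apply: (le_trans h1 (maxA_ge _ a0)).
Qed.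

End MaxOverActions.

Section DiscountedMDP.
Variables (R : realType) (n : nat) (A : finType).
Variables (P : 'I_n -> A -> 'I_n -> R) (r : 'I_n -> A -> R) (alpha : R).
Hypothesis hP0 : forall s a j, 0 <= P s a j.
Hypothesis hP1 : forall s a, \sum_(j < n) P s a j = 1.
Hypothesis hr : forall s a, 0 <= r s a <= 1.
Hypothesis halpha : 0 < alpha < 1.

Local Notation T := (Tbell P r alpha).
Local Notation Tmu := (Tpol P r alpha).
Local Notation Jmu := (Jpol P r alpha).
(* Values of all policies lie in [0, B]. *)
Local Notation B := ((1 - alpha)^-1).

Let alpha_ge0 : 0 <= alpha.
Proof. by case/andP: halpha => h _; exact: ltW. Qed.

Let B_ge0 : 0 <= B.
Proof. by rewrite invr_ge0 subr_ge0; case/andP: halpha => _ h; exact: ltW. Qed.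

Let backup s a (x : 'cV[R]_n) := r s a + alpha * \sum_j P s a j * x j 0.

Let backup_lipschitz s a x y : `|backup s a x - backup s a y| <= alpha * vnorm (x - y).
Proof.
rewrite /backup opprD addrACA subrr add0r -mulrBr normrM ger0_norm //.
exact/ler_wpM2l/wavg_lipschitz.
Qed.

(* Since 1 + alpha B = B, a backup maps [0, B]^S into [0, B]. *)
Let backup_box s a x : inbox B x -> 0 <= backup s a x <= B.
Proof.
move=> hx; case/andP: (wavg_box (hP0 s a) (hP1 s a) hx) => h1 h2.
case/andP: (hr s a) => h3 h4; apply/andP; split; first by rewrite addr_ge0 ?mulr_ge0.
have hB : 1 + alpha * B = B.
  case/andP: halpha => _ h; have hne : 1 - alpha != 0 by rewrite subr_eq0 gt_eqF.
  by field.
by rewrite -hB lerD // ler_wpM2l.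
Qed.

Lemma Tpol_contraction mu x y : vnorm (Tmu mu x - Tmu mu y) <= alpha * vnorm (x - y).
Proof.
apply: vnorm_le => [|s]; first by rewrite mulr_ge0 ?vnorm_ge0.
by rewrite !mxE; exact: backup_lipschitz.
Qed.

Lemma Tbell_contraction (a0 : 'I_n -> A) x y :
  vnorm (T x - T y) <= alpha * vnorm (x - y).
Proof.
apply: vnorm_le => [|s]; first by rewrite mulr_ge0 ?vnorm_ge0.
by rewrite !mxE; apply: (maxA_lipschitz (a0 s)) => a; exact: backup_lipschitz.
Qed.

Lemma Tpol_box mu x : inbox B x -> inbox B (Tmu mu x).
Proof. by move=> hx s; rewrite mxE; exact: backup_box. Qed.

Lemma Tbell_box (a0 : 'I_n -> A) x : inbox B x -> inbox B (T x).
Proof. by move=> hx s; rewrite mxE; apply: (maxA_box (a0 s)) => a; exact: backup_box. Qed.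

Lemma Tpol_monotone mu (x y : 'cV[R]_n) :
  (forall j, x j 0 <= y j 0) -> forall s, Tmu mu x s 0 <= Tmu mu y s 0.
Proof.
move=> hxy s; rewrite !mxE lerD2l ler_wpM2l //; apply: ler_sum => j _.
by rewrite ler_wpM2l.
Qed.

Definition partial_value mu (N : nat) : 'cV[R]_n :=
  \col_s \sum_(t < N) alpha ^+ t * ((Pmat P mu ^+ t) *m rvec r mu) s 0.

Lemma partial_value_rec mu N : partial_value mu N.+1 = Tmu mu (partial_value mu N).
Proof.
apply/matrixP => s i; rewrite (ord1 i) !mxE big_ord_recl expr0 mul1r.
rewrite expr0 mul1mx mxE; congr (_ + _).
have mE : forall (M1 M2 : 'M[R]_n), M1 * M2 = M1 *m M2 by [].
under eq_bigr => t _ do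
  rewrite /= /bump /= add1n (exprS (Pmat P mu)) mE -mulmxA (exprS alpha) mxE.
under [X in _ = alpha * X]eq_bigr => j _ do rewrite mxE big_distrr /=.
rewrite [RHS]big_distrr /=.
under [RHS]eq_bigr => j _ do rewrite big_distrr /=.
rewrite [RHS]exchange_big /=; apply: eq_bigr => t _.
by rewrite big_distrr /=; apply: eq_bigr => j _; rewrite !mxE; ring.
Qed.

Lemma partial_value_box mu N : inbox B (partial_value mu N).
Proof.
elim: N => [|N IH]; last by rewrite partial_value_rec; exact: Tpol_box.
by move=> s; rewrite mxE big_ord0 lexx.
Qed.

Lemma partial_value_nondecreasing mu N s :
  partial_value mu N s 0 <= partial_value mu N.+1 s 0.
Proof.
elim: N s => [|N IH] s.
  have z j : partial_value mu 0 j 0 = 0 by rewrite mxE big_ord0.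
  rewrite z partial_value_rec mxE; under eq_bigr do rewrite z mulr0.
  by rewrite big1_eq mulr0 addr0; case/andP: (hr s (mu s)).
rewrite (partial_value_rec _ N.+1) {1}(partial_value_rec _ N).
exact: Tpol_monotone.
Qed.

(* Bounded nondecreasing partial sums converge, to J^mu by definition. *)
Lemma partial_value_cvg mu s :
  (fun N => partial_value mu N s 0) @ \oo --> Jmu mu s 0.
Proof.
set u := fun N => partial_value mu N s 0.
have nd : nondecreasing_seq u.
  by apply/nondecreasing_seqP => N; exact: partial_value_nondecreasing.
have ub : has_ubound (range u).
  by exists B => _ [N _ <-]; case/andP: (partial_value_box mu N s).
have -> : Jmu mu s 0 = limn u.
  by rewrite mxE; congr (limn _); apply/funext => N; rewrite /u mxE.
have c := nondecreasing_cvgn nd ub.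
by rewrite (cvg_lim _ c).
Qed.

Lemma Jpol_box mu : inbox B (Jmu mu).
Proof.
move=> s; have c := @partial_value_cvg mu s.
have hb N := partial_value_box mu N s.
apply/andP; split.
  by apply: (cvgr_to_ge c); apply: nearW => N; case/andP: (hb N).
by apply: (cvgr_to_le c); apply: nearW => N; case/andP: (hb N).
Qed.

Lemma Jpol_norm mu : vnorm (Jmu mu) <= B.
Proof.
apply: vnorm_le => // s; case/andP: (Jpol_box mu s) => h1 h2.
by rewrite ger0_norm.
Qed.

(* J^mu is the fixed point of T_mu (pass to the limit in partial_value_rec). *)
Lemma Jpol_fixpoint mu : Tmu mu (Jmu mu) = Jmu mu.
Proof.
apply/matrixP => s i; rewrite (ord1 i).
have c1 : (fun N => partial_value mu N.+1 s 0) @ \oo --> Jmu mu s 0.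
  by have := @partial_value_cvg mu s; rewrite -cvg_shiftS.
suff c2 : (fun N => partial_value mu N.+1 s 0) @ \oo --> Tmu mu (Jmu mu) s 0.
  exact: (cvg_unique _ c2 c1).
under eq_fun => N do rewrite partial_value_rec mxE.
rewrite mxE; apply: cvgD; first exact: cvg_cst.
apply: cvgMl_tmp; apply: cvg_big => //; first exact: add_continuous.
by move=> j _; apply: cvgMl_tmp; exact: partial_value_cvg.
Qed.

Lemma rollout_error m nu y :
  vnorm (iter m (Tmu nu) y - Jmu nu) <= alpha ^+ m * vnorm (y - Jmu nu).
Proof.
have fix_m : iter m (Tmu nu) (Jmu nu) = Jmu nu.
  by elim: m => //= m' ->; exact: Jpol_fixpoint.
rewrite -{1}fix_m; apply: iter_contraction => // x y'.
exact: Tpol_contraction.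
Qed.

Lemma lookahead_error (a0 : 'I_n -> A) h Jk nu nu' :
  vnorm (iter h T Jk - Jmu nu') <= alpha ^+ h * vnorm (Jk - Jmu nu) + B.
Proof.
rewrite -(subrK (iter h T (Jmu nu)) (iter h T Jk)) -addrA.
apply: (le_trans (vnorm_triangle _ _)); apply: lerD.
  by apply: iter_contraction => // x y; exact: (Tbell_contraction a0).
apply: inbox_dist => //; last exact: Jpol_box.
by elim: h => [|h IH] /=; [exact: Jpol_box | exact: (Tbell_box a0)].
Qed.

Lemma api_step_error (a0 : 'I_n -> A) m h (M : 'M[R]_n) (dM dapp eps : R)
    Jk nu nu' (w : 'cV[R]_n) :
  mnorm M <= dM -> vnorm (M *m Jmu nu' - Jmu nu') <= dapp -> vnorm w <= eps ->
  vnorm (M *m (iter m (Tmu nu') (iter h T Jk) + w) - Jmu nu')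
    <= dM * (alpha ^+ m * (alpha ^+ h * vnorm (Jk - Jmu nu) + B)) + dapp + dM * eps.
Proof.
move=> hM happ hw; apply: (le_trans (projection_error _ _ _ _)).
have hM0 : 0 <= dM := le_trans (mnorm_ge0 M) hM.
apply: lerD; first apply: lerD => //.
- apply: (le_trans (ler_wpM2r (vnorm_ge0 _) hM)); apply: ler_wpM2l => //.
  apply: (le_trans (rollout_error _ _ _)); apply: ler_wpM2l; first exact: exprn_ge0.
  exact: lookahead_error.
- exact: (le_trans (ler_wpM2r (vnorm_ge0 _) hM) (ler_wpM2l hM0 hw)).
Qed.

End DiscountedMDP.

Lemma affine_recursion_bound (R : realType) (beta tau : R) (e : nat -> R) :
  0 <= beta -> beta < 1 -> 0 <= tau -> (forall k, e k.+1 <= beta * e k + tau) ->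
  forall k, e k <= beta ^+ k * e 0%N + tau / (1 - beta).
Proof.
move=> hb0 hb1 ht hrec; elim => [|k IH].
  by rewrite expr0 mul1r lerDl divr_ge0 // subr_ge0 ltW.
apply: (le_trans (hrec k)).
have hne : 1 - beta != 0 by rewrite subr_eq0 eq_sym lt_eqF.
have -> : beta ^+ k.+1 * e 0%N + tau / (1 - beta)
    = beta * (beta ^+ k * e 0%N + tau / (1 - beta)) + tau by rewrite exprS; field.
by rewrite lerD2r ler_wpM2l.
Qed.

Theorem mainTheorem3 (R : realType) (nS d : nat) (A : finType)
  (P : 'I_nS -> A -> 'I_nS -> R) (r : 'I_nS -> A -> R) (alpha : R)
  (hP0 : forall s a j, 0 <= P s a j)
  (hP1 : forall s a, \sum_(j < nS) P s a j = 1)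
  (hr : forall s a, 0 <= r s a <= 1)
  (halpha : 0 < alpha < 1)
  (m H : nat) (hm : (1 <= m)%N) (hH : (1 <= H)%N)
  (eLA ePE : R) (heLA : 0 <= eLA) (hePE : 0 <= ePE)
  (Phi : 'M[R]_(nS, d)) (D : nat -> {set 'I_nS})
  (hD : forall k, \rank (PhiD Phi (D k)) = d)
  (J : nat -> 'cV[R]_nS) (mu : nat -> 'I_nS -> A) (w : nat -> 'cV[R]_nS)
  (hmu : forall k, vnorm (iter H (Tbell P r alpha) (J k)
            - Tpol P r alpha (mu k.+1) (iter H.-1 (Tbell P r alpha) (J k))) <= eLA)
  (hw0 : forall k i, i \notin D k -> w k.+1 i 0 = 0)
  (hw : forall k, vnorm (w k.+1) <= ePE)
  (hJ : forall k, J k.+1 = Mproj Phi (D k) *m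
          (iter m (Tpol P r alpha (mu k.+1)) (iter H.-1 (Tbell P r alpha) (J k))
           + w k.+1))
  (hFV : has_ubound (range (fun k : nat => mnorm (Mproj Phi (D k))))) :
  let dFV := sup (range (fun k : nat => mnorm (Mproj Phi (D k)))) in
  let dapp := sup [set x : R | exists (k : nat) (nu : 'I_nS -> A),
                 x = vnorm (Mproj Phi (D k) *m Jpol P r alpha nu - Jpol P r alpha nu)] in
  let beta := alpha ^+ (m + H - 1) * dFV in
  let tau := (alpha ^+ m + alpha ^+ (m + H - 1)) / (1 - alpha) * dFV
             + dapp + dFV * ePE in
  (forall k : nat, (1 <= k)%N ->
     vnorm (J k - Jpol P r alpha (mu k))
       <= beta * vnorm (J k.-1 - Jpol P r alpha (mu k.-1)) + tau) /\
  (beta < 1 -> forall k : nat,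
     vnorm (J k - Jpol P r alpha (mu k))
       <= beta ^+ k * vnorm (J 0%N - Jpol P r alpha (mu 0%N)) + tau / (1 - beta)).
Proof.
move=> dFV dapp beta tau.
set B := (1 - alpha)^-1.
have ha0 : 0 <= alpha by case/andP: halpha => /ltW.
have hB0 : 0 <= B by rewrite invr_ge0 subr_ge0; case/andP: halpha => _ /ltW.
have hMk k : mnorm (Mproj Phi (D k)) <= dFV by apply: (ub_le_sup hFV); exists k.
have hFV0 : 0 <= dFV := le_trans (mnorm_ge0 _) (hMk 0%N).
(* dapp is finite: |M J^nu - J^nu| <= dFV B + B. *)
have happ k nu : vnorm (Mproj Phi (D k) *m Jpol P r alpha nu - Jpol P r alpha nu) <= dapp.
  apply: ub_le_sup; last by exists k, nu.
  exists (dFV * B + B) => _ [k' [nu' ->]].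
  apply: (le_trans (vnorm_subr _ _)); apply: lerD; last exact: Jpol_norm.
  apply: (le_trans (vnorm_mulmx _ _)); apply: ler_pM => //; rewrite ?mnorm_ge0 ?vnorm_ge0 //.
  exact: Jpol_norm.
have happ0 : 0 <= dapp := le_trans (vnorm_ge0 _) (happ 0%N (mu 0%N)).
have step k : vnorm (J k.+1 - Jpol P r alpha (mu k.+1))
    <= beta * vnorm (J k - Jpol P r alpha (mu k)) + tau.
  rewrite hJ; apply: le_trans (api_step_error hP0 hP1 hr halpha (mu 0%N) m H.-1
    (J k) (mu k) (hMk k) (happ k (mu k.+1)) (hw k)) _.
  rewrite /beta /tau; have -> : (m + H - 1 = m + H.-1)%N by lia.
  rewrite exprD -/B.
  have a0 : 0 <= alpha ^+ m := exprn_ge0 _ ha0.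
  have b0 : 0 <= alpha ^+ H.-1 := exprn_ge0 _ ha0.
  have e0 := vnorm_ge0 (J k - Jpol P r alpha (mu k)).
  have slack : 0 <= dFV * alpha ^+ m * alpha ^+ H.-1 * B by rewrite !mulr_ge0.
  nra.
split; first by case=> [|k] // _; exact: step.
move=> hb1; apply: affine_recursion_bound => //.
- by rewrite /beta mulr_ge0 // exprn_ge0.
- by rewrite /tau -/B !addr_ge0 ?mulr_ge0 ?addr_ge0 ?exprn_ge0.
Qed.
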